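(* Let $B_0\subset\Omega_\infty$ be an open set containing the identity, $B=B_0B_0^{-1}$, $B_2=B\cdot B$, $B_3=B\cdot B\cdot B$. Let $\nu$ be a probability measure on $X$ and $y_1,\dots,y_r\in X$. Then $$\sum_{i=1}^r\nu(y_iB)^{1/2}\ll\frac{\mathrm{vol}\,B_3}{\mathrm{vol}\,B_0}\Big(\#\{(i,j):y_iB_2\cap y_jB_2\neq\emptyset\}\Big)^{1/2}.$$
   Context: $\mathbf{G}$ is a semisimple group over $\mathbb{Q}$, $G=\mathbf{G}(\mathbb{R})$, $K_f\subset\mathbf{G}(\mathbb{A}_f)$ an open compact subgroup, $X=\mathbf{G}(\mathbb{Q})\backslash\mathbf{G}(\mathbb{A})/K_f$, with $G$ acting on the right; $yS=\{ys:s\in S\}\subset X$ for $y\in X$, $S\subset G$. $\Omega_\infty\subset G$ is a fixed compact set, $\mathrm{vol}$ a Haar measure on $G$. Implicit constants may depend on $\mathbf{G}$ and the fixed data ($K_f$, $\Omega_\infty$, a fixed embedding $\rho$ and compact $\Omega\subset\mathbf{G}(\mathbb{A})$). *)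

From HB Require Import structures.
From mathcomp Require Import all_boot all_order all_algebra.
From mathcomp Require Import all_classical all_reals all_analysis.
Set Implicit Arguments. Unset Strict Implicit. Unset Printing Implicit Defensive.
Import Order.TTheory GRing.Theory Num.Theory.
Local Open Scope classical_set_scope.
Local Open Scope ring_scope.

Definition is_topological_group (G : ptopologicalType)
  (mul : G -> G -> G) (inv : G -> G) (one : G) : Prop :=
  [/\ (forall a b c, mul a (mul b c) = mul (mul a b) c),
      (forall a, mul one a = a),
      (forall a, mul (inv a) a = one),
      continuous (fun p : G * G => mul p.1 p.2)
    & continuous inv].

Notation borel G := (g_sigma_algebraType (@open G)).

Definition is_haar_measure (R : realType) (G : ptopologicalType)
  (mul : G -> G -> G) (vol : {measure set (borel G) -> \bar R}) : Prop :=
  [/\ (forall (g : G) (A : set G), measurable (A : set (borel G)) ->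
          vol (mul g @` A) = vol A),
      (forall K : set G, compact K -> (vol K < +oo)%E)
    & (forall U : set G, open U -> U !=set0 -> (0 < vol U)%E)].

Definition is_right_action (G X : Type) (mul : G -> G -> G) (one : G)
  (act : X -> G -> X) : Prop :=
  (forall x, act x one = x) /\
  (forall x g h, act (act x g) h = act x (mul g h)).

Definition setmul (G : Type) (mul : G -> G -> G) (A B : set G) : set G :=
  [set mul a b | a in A & b in B].
Definition setinv (G : Type) (inv : G -> G) (A : set G) : set G := inv @` A.

Definition orbit_set (G X : Type) (act : X -> G -> X) (y : X) (S : set G)
  : set X := act y @` S.

(* Let d_i be the number of j with y_i B2 meeting y_j B2.  Since B is contained
   in B2, a point x of y_i B lies in at most d_i of the sets y_j B, so
   sum_i 1_{y_i B} / d_i <= 1 pointwise and, integrating against nu,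
   sum_i nu(y_i B) / d_i <= 1.  Cauchy--Schwarz then gives
   sum_i nu(y_i B)^{1/2} <= (sum_i d_i)^{1/2}, and sum_i d_i is the number of
   intersecting pairs.  The volume factor is at least 1 because B0 is contained
   in B3, whose volume is finite as B3 lies in a compact set; so C = 1 works. *)

From HB Require Import structures.
From mathcomp Require Import all_boot all_order all_algebra.
From mathcomp Require Import all_classical all_reals all_analysis.
From mathcomp Require Import measurable_realfun ring lra.
Import Order.TTheory GRing.Theory Num.Theory.
Local Open Scope classical_set_scope.
Local Open Scope ring_scope.

Section TopologicalGroup.
Context {G : ptopologicalType} {mul : G -> G -> G} {inv : G -> G} {one : G}.
Hypothesis hG : is_topological_group mul inv one.

Lemma tgroup_mulgV a : mul a (inv a) = one.
Proof.
case: hG => mulA mul1g mulVg _ _.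
by rewrite -[LHS]mul1g -(mulVg (inv a)) -mulA (mulA (inv a)) mulVg mul1g mulVg.
Qed.

Lemma tgroup_mulg1 a : mul a one = a.
Proof.
by case: hG => mulA mul1g mulVg _ _; rewrite -(mulVg a) mulA tgroup_mulgV mul1g.
Qed.

Lemma tgroup_invg1 : inv one = one.
Proof. by case: hG => _ _ mulVg _ _; rewrite -[LHS]tgroup_mulg1 mulVg. Qed.

Lemma setmul_subl {A S : set G} : S one -> A `<=` setmul mul A S.
Proof. by move=> S1 a Aa; exists a => //; exists one => //; exact: tgroup_mulg1. Qed.

Lemma setinv_one {A : set G} : A one -> setinv inv A one.
Proof. by move=> A1; exists one => //; exact: tgroup_invg1. Qed.

Lemma setmulS {A A' S S' : set G} :
  A `<=` A' -> S `<=` S' -> setmul mul A S `<=` setmul mul A' S'.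
Proof. by move=> AA' SS' _ [a /AA' A'a [s /SS' S's <-]]; exists a => //; exists s. Qed.

Lemma setinvS {A A' : set G} : A `<=` A' -> setinv inv A `<=` setinv inv A'.
Proof. exact: image_subset. Qed.

Lemma continuous_mulr c : continuous (fun x => mul x c).
Proof.
case: hG => _ _ _ cmul _ x.
apply: (@continuous_comp _ _ _ (fun x => (x, c)) (fun p : G * G => mul p.1 p.2)).
  exact: cvg_pair cvg_id (cvg_cst c).
exact: cmul.
Qed.

Lemma open_setmul {A : set G} (S : set G) : open A -> open (setmul mul A S).
Proof.
case: hG => mulA _ mulVg _ _ oA.
have -> : setmul mul A S = \bigcup_(s in S) ((fun x => mul x (inv s)) @^-1` A).
  apply/seteqP; split => x.
    by case=> a Aa [s Ss <-]; exists s => //=; rewrite -mulA tgroup_mulgV tgroup_mulg1.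
  case=> s Ss /= Ax; exists (mul x (inv s)) => //; exists s => //.
  by rewrite -mulA mulVg tgroup_mulg1.
apply: bigcup_open => s _.
by move/continuousP: (continuous_mulr (inv s)); apply.
Qed.

Lemma compact_setmul {P Q : set G} : compact P -> compact Q -> compact (setmul mul P Q).
Proof.
move=> cP cQ.
have -> : setmul mul P Q = (fun p : G * G => mul p.1 p.2) @` (P `*` Q).
  apply/seteqP; split => x.
    by case=> a Pa [b Qb <-]; exists (a, b).
  by case=> [[a b] [/= Pa Qb] <-]; exists a => //; exists b.
apply: continuous_compact; last exact: compact_setX.
by apply: continuous_subspaceT; case: hG.
Qed.

Lemma compact_setinv {P : set G} : compact P -> compact (setinv inv P).
Proof.
by move=> cP; apply: continuous_compact => //; apply: continuous_subspaceT; case: hG.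
Qed.

End TopologicalGroup.

Lemma borel_open_measurable (G : ptopologicalType) (U : set G) :
  open U -> measurable (U : set (borel G)).
Proof. exact: sub_gen_smallest. Qed.

Lemma borel_compact_measurable (G : ptopologicalType) (K : set G) :
  hausdorff_space G -> compact K -> measurable (K : set (borel G)).
Proof.
move=> hausG cK; rewrite -[K]setCK; apply: measurableC.
apply: borel_open_measurable; apply: closed_openC; exact: compact_closed.
Qed.

Lemma measure_ratio_ge1 d (T : measurableType d) (R : realType)
    (mu : {measure set T -> \bar R}) (U V : set T) :
  measurable U -> measurable V -> U `<=` V ->
  (0 < mu U)%E -> (mu V < +oo)%E -> 1 <= fine (mu V) / fine (mu U).
Proof.
move=> mU mV UV muU_gt0 muV_fin.
have muUV : (mu U <= mu V)%E := le_measure mu (mem_set mU) (mem_set mV) UV.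
have muU_fin : (mu U < +oo)%E := le_lt_trans muUV muV_fin.
have fU_gt0 : 0 < fine (mu U) by apply: fine_gt0; rewrite muU_gt0 muU_fin.
rewrite ler_pdivlMr // mul1r.
by apply: fine_le => //; rewrite ge0_fin_numE.
Qed.

Lemma mul2r_le_sqr_scaled {R : realFieldType} (u v t : R) :
  0 < t -> 2 * (u * v) <= t * u ^+ 2 + v ^+ 2 / t.
Proof.
move=> t_gt0.
have -> : t * u ^+ 2 + v ^+ 2 / t = 2 * (u * v) + (t * u - v) ^+ 2 / t.
  by field; rewrite gt_eqF.
by rewrite lerDl divr_ge0 ?sqr_ge0 ?ltW.
Qed.

(* Cauchy--Schwarz for [sqrt (a i / d i) * sqrt (d i)], through AM--GM with
   the scale [t = sqrt (\sum_i d i)]. *)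
Lemma sum_sqrt_le_sqrt_sum (R : rcfType) (I : finType) (a d : I -> R) :
  (forall i, 0 <= a i) -> (forall i, 0 < d i) -> \sum_i a i / d i <= 1 ->
  \sum_i Num.sqrt (a i) <= Num.sqrt (\sum_i d i).
Proof.
move=> a_ge0 d_gt0 sum_ad_le1.
case: (pickP (@predT I)) => [i0 _ | I0]; last by rewrite big_pred0 ?sqrtr_ge0.
set S := \sum_i d i; set t := Num.sqrt S.
have S_gt0 : 0 < S.
  apply: lt_le_trans (d_gt0 i0) _.
  by rewrite /S (bigD1 i0) //= lerDl sumr_ge0 // => i _; exact: ltW.
have t_gt0 : 0 < t by rewrite sqrtr_gt0.
have sqrt_a i : Num.sqrt (a i) = Num.sqrt (a i / d i) * Num.sqrt (d i).
  by rewrite -sqrtrM ?divfK ?gt_eqF ?divr_ge0 ?(ltW (d_gt0 i)).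
rewrite -(ler_pM2l (ltr0Sn R 1)) mulr_sumr.
apply: (@le_trans _ _ (\sum_i (t * (a i / d i) + d i / t))).
  apply: ler_sum => i _; rewrite sqrt_a.
  have := mul2r_le_sqr_scaled (Num.sqrt (a i / d i)) (Num.sqrt (d i)) _ t_gt0.
  by rewrite !sqr_sqrtr ?divr_ge0 ?(ltW (d_gt0 i)).
rewrite big_split /= -mulr_sumr -mulr_suml -/S.
have -> : S / t = t by rewrite -{1}(sqr_sqrtr (ltW S_gt0)) expr2 mulfK ?gt_eqF.
have : t * (\sum_i a i / d i) <= t * 1 by rewrite ler_pM2l.
lra.
Qed.

Lemma sum_pred_div_le1 (R : numFieldType) (I : finType) (P : pred I) (d : I -> R) :
  (forall i, P i -> #|P|%:R <= d i) -> \sum_i (P i)%:R / d i <= 1.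
Proof.
move=> dP.
rewrite (bigID P) /= [X in _ + X]big1 ?addr0 => [|i /negbTE->]; last by rewrite mul0r.
case: (pickP P) => [i0 Pi0 | P0]; last by rewrite big_pred0.
have cardP_gt0 : 0 < #|P|%:R :> R by rewrite ltr0n; apply/card_gt0P; exists i0.
apply: (@le_trans _ _ (\sum_(i | P i) #|P|%:R^-1)).
  apply: ler_sum => i Pi.
  by rewrite Pi mul1r lef_pV2 ?posrE ?dP ?(lt_le_trans cardP_gt0 (dP i Pi)).
by rewrite sumr_const -[_ *+ #|P|]mulr_natr mulVf ?gt_eqF.
Qed.

Lemma card_classical_set (T : finType) (p : pred T) :
  #|[set x | p x]| = #|[set x | p x]%SET|.
Proof. by apply: eq_card => x; rewrite inE; apply/idP/idP; rewrite in_setE. Qed.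

Lemma card_pairs (I J : finType) (rel : I -> J -> bool) :
  #|[set ij : I * J | rel ij.1 ij.2]| = (\sum_i #|[set j | rel i j]|)%N.
Proof.
under eq_bigr => i _ do rewrite card_classical_set -sum1dep_card.
by rewrite pair_big_dep sum1dep_card card_classical_set.
Qed.

Section ProbabilityOverlaps.
Context {d : measure_display} {X : measurableType d} {R : realType}.
Variable nu : probability X R.

Lemma probability_sum_le1 {I : finType} (A : I -> set X) (w : I -> R) :
  (forall i, measurable (A i)) -> (forall i, 0 <= w i) ->
  (forall x, \sum_i w i * \1_(A i) x <= 1) ->
  \sum_i fine (nu (A i)) * w i <= 1.
Proof.
move=> mA w_ge0 sum_le1.
have f_ge0 i x : [set: X] x -> (0 <= (w i * \1_(A i) x)%:E)%E.
  by move=> _; rewrite lee_fin mulr_ge0.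
have f_meas i : measurable_fun [set: X] (fun x => (w i * \1_(A i) x)%:E).
  by apply/measurable_EFinP; apply: measurable_funM.
have int_f i : (\int[nu]_(x in [set: X]) (w i * \1_(A i) x)%:E
                 = (fine (nu (A i)) * w i)%:E)%E.
  rewrite (@integralZl_indic _ _ _ _ _ _ (fun _ => A i)) //; last first.
    by move=> h; have := w_ge0 i; rewrite leNgt h.
  rewrite integral_indic // setIT EFinM fineK ?fin_num_measure //.
  by rewrite muleC.
rewrite -lee_fin -sumEFin; under eq_bigr => i _ do rewrite -int_f.
rewrite -ge0_integral_sum //.
apply: (@le_trans _ _ (\int[nu]_(x in [set: X]) (cst 1%E x))%E).
  apply: ge0_le_integral => //.
  - by move=> x _; apply: sume_ge0 => i _; exact: f_ge0.
  - exact: emeasurable_sum.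
  - by move=> x _; rewrite sumEFin lee_fin; exact: sum_le1.
by rewrite integral_cst // mul1e probability_le1.
Qed.

Lemma sum_sqrt_probability_le_overlaps {I : finType} (A A' : I -> set X) :
  (forall i, measurable (A i)) -> (forall i, A i `<=` A' i) ->
  (forall i, A' i !=set0) ->
  \sum_i Num.sqrt (fine (nu (A i)))
  <= Num.sqrt #|[set ij : I * I | `[< A' ij.1 `&` A' ij.2 !=set0 >] ]|%:R.
Proof.
move=> mA AA' A'_neq0.
set overlaps := fun i => #|[set j | `[< A' i `&` A' j !=set0 >] ]|.
have overlaps_gt0 i : 0 < (overlaps i)%:R :> R.
  rewrite ltr0n; apply/card_gt0P; exists i; rewrite in_setE /= setIid.
  exact/asboolP.
rewrite (@card_pairs I I (fun i j => `[< A' i `&` A' j !=set0 >])) natr_sum.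
apply: sum_sqrt_le_sqrt_sum => // [i | ]; first exact/fine_ge0/measure_ge0.
apply: (probability_sum_le1 A (fun i => (overlaps i)%:R^-1)) => // x.
under eq_bigr => i _ do rewrite indicE mulrC.
apply: (@sum_pred_div_le1 _ _ (fun i => x \in A i)) => i /set_mem Aix.
rewrite ler_nat; apply: subset_leq_card; apply/fintype.subsetP => j.
rewrite !inE => Ajx /=; apply/asboolP.
by exists x; split; [exact: AA' | exact: AA'].
Qed.

End ProbabilityOverlaps.

Theorem lemma3p2 (R : realType) (G : ptopologicalType)
  (mul : G -> G -> G) (inv : G -> G) (one : G)
  (vol : {measure set (borel G) -> \bar R})
  (dX : measure_display) (X : measurableType dX) (act : X -> G -> X)
  (Omega_inf : set G) :
  is_topological_group mul inv one ->
  hausdorff_space G -> locally_compact [set: G] ->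
  is_haar_measure mul vol ->
  is_right_action mul one act ->
  (forall (y : X) (U : set G), open U -> measurable (orbit_set act y U)) ->
  compact Omega_inf ->
  exists C : R, 0 < C /\
  forall (B0 : set G) (nu : probability X R) (r : nat) (y : 'I_r -> X),
    open B0 -> B0 one -> B0 `<=` Omega_inf ->
    let B := setmul mul B0 (setinv inv B0) in
    let B2 := setmul mul B B in
    let B3 := setmul mul (setmul mul B B) B in
    \sum_(i < r) Num.sqrt (fine (nu (orbit_set act (y i) B)))
    <= C * (fine (vol B3) / fine (vol B0))
         * Num.sqrt (#|[set ij : 'I_r * 'I_r |
                        `[< orbit_set act (y ij.1) B2 `&`
                            orbit_set act (y ij.2) B2 !=set0 >] ]|)%:R.
Proof.
move=> hG hausG _ [_ vol_compact vol_open] _ orbit_meas cOmega.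
exists 1; split => [// | B0 nu r y oB0 B0_1 B0_Omega]; cbv zeta.
set B := setmul mul B0 _; set B2 := setmul mul B B; set B3 := setmul mul B2 B.
have B0B : B0 `<=` B := setmul_subl hG (setinv_one hG B0_1).
have BB2 : B `<=` B2 := setmul_subl hG (B0B _ B0_1).
have B2B3 : B2 `<=` B3 := setmul_subl hG (B0B _ B0_1).
have oB : open B := open_setmul hG _ oB0.
have oB3 : open B3 := open_setmul hG _ (open_setmul hG _ oB).
set K := setmul mul Omega_inf (setinv inv Omega_inf).
have BK : B `<=` K := setmulS B0_Omega (setinvS B0_Omega).
have cK3 : compact (setmul mul (setmul mul K K) K).
  have cK := compact_setmul hG cOmega (compact_setinv hG cOmega).
  exact (compact_setmul hG (compact_setmul hG cK cK) cK).
have vol_ratio : 1 <= fine (vol B3) / fine (vol B0).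
  apply: measure_ratio_ge1.
  - exact: borel_open_measurable.
  - exact: borel_open_measurable.
  - by move=> b /B0B /BB2 /B2B3.
  - by apply: vol_open => //; exists one.
  apply: le_lt_trans (vol_compact _ cK3).
  apply: le_measure; rewrite ?inE.
  - exact: borel_open_measurable.
  - exact: borel_compact_measurable.
  - exact (setmulS (setmulS BK BK) BK).
rewrite mul1r; apply: le_trans (ler_peMl (sqrtr_ge0 _) vol_ratio).
apply: (sum_sqrt_probability_le_overlaps nu
  (fun i => orbit_set act (y i) B) (fun i => orbit_set act (y i) B2)) => i.
- exact: orbit_meas.
- exact: image_subset.
- by exists (act (y i) one); exists one => //; apply/BB2/B0B.
Qed.
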